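(* Let $H$ be a complex Hilbert space and let $A,K\in B(H)$ be such that $A$ is positive and $(AK)^*$ is hyponormal. Then \[|\langle AKx,x\rangle|\leq \|K\|\,\langle Ax,x\rangle\] for all $x\in H$.
   Context: $B(H)$ denotes the algebra of bounded linear operators on $H$. An operator $A\in B(H)$ is positive if $\langle Ax,x\rangle\geq 0$ for all $x\in H$. An operator $T\in B(H)$ is hyponormal if $TT^*\leq T^*T$, i.e. $T^*T-TT^*$ is positive. *)

From HB Require Import structures.
From mathcomp Require Import all_boot all_order all_algebra.
From mathcomp Require Import complex.
From mathcomp Require Import classical_sets reals.

Set Implicit Arguments.
Unset Strict Implicit.
Unset Printing Implicit Defensive.
Import Order.TTheory GRing.Theory Num.Theory.
Local Open Scope ring_scope.
Local Open Scope complex_scope.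
Local Open Scope classical_set_scope.

Record is_inner_product (R : realType) (V : lmodType R[i])
    (ip : V -> V -> R[i]) : Prop := {
  ip_linear : forall (a : R[i]) (x y z : V), ip (a *: x + y) z = a * ip x z + ip y z;
  ip_conj : forall x y : V, ip y x = conjc (ip x y);
  ip_ge0 : forall x : V, 0 <= ip x x;     (* real and nonnegative in R[i] *)
  ip_definite : forall x : V, ip x x = 0 -> x = 0 }.

Definition ipnorm (R : realType) (V : lmodType R[i]) (ip : V -> V -> R[i]) (x : V) : R :=
  Num.sqrt (complex.Re (ip x x)).

Definition ip_complete (R : realType) (V : lmodType R[i]) (ip : V -> V -> R[i]) : Prop :=
  forall u : nat -> V,
    (forall e : R, 0 < e -> exists N, forall m n, (N <= m)%N -> (N <= n)%N ->
        ipnorm ip (u m - u n) < e) ->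
    exists l : V, forall e : R, 0 < e -> exists N, forall n, (N <= n)%N ->
        ipnorm ip (u n - l) < e.

Definition is_Hilbert (R : realType) (V : lmodType R[i]) (ip : V -> V -> R[i]) : Prop :=
  is_inner_product ip /\ ip_complete ip.

Definition bounded_op (R : realType) (V : lmodType R[i]) (ip : V -> V -> R[i])
    (T : V -> V) : Prop :=
  (forall (a : R[i]) (x y : V), T (a *: x + y) = a *: T x + T y) /\
  exists M : R, forall x, ipnorm ip (T x) <= M * ipnorm ip x.

Definition opnorm (R : realType) (V : lmodType R[i]) (ip : V -> V -> R[i])
    (T : V -> V) : R :=
  sup [set r : R | exists x : V, ipnorm ip x <= 1 /\ r = ipnorm ip (T x)].

Definition positive_op (R : realType) (V : lmodType R[i]) (ip : V -> V -> R[i])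
    (A : V -> V) : Prop :=
  forall x, 0 <= ip (A x) x.

Definition is_adjoint (R : realType) (V : lmodType R[i]) (ip : V -> V -> R[i])
    (T S : V -> V) : Prop :=
  forall x y, ip (T x) y = ip x (S y).

Definition hyponormal (R : realType) (V : lmodType R[i]) (ip : V -> V -> R[i])
    (T : V -> V) : Prop :=
  forall Tadj : V -> V, is_adjoint ip T Tadj ->
    positive_op ip (fun x => Tadj (T x) - T (Tadj x)).

From HB Require Import structures.
From mathcomp Require Import all_boot all_order all_algebra.
From mathcomp Require Import complex.
From mathcomp Require Import classical_sets reals.
From mathcomp Require Import ring lra.
Import Order.TTheory GRing.Theory Num.Theory.
Local Open Scope ring_scope.
Local Open Scope complex_scope.

(* Let T = AK and S = T^* (formally S = K^* A), and c = ||K||.  Hyponormality of S gives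
   |Tx| <= |Sx|, and |Sy|^2 = <KSy, Ay> <= c |Sy| |Ay| gives |Sy| <= c |Ay|.  Hence the
   selfadjoint operator B = SK (formally K^* A K) satisfies
   |Bx| <= c |Tx| <= c |Sx| <= c^2 |Ax|, i.e. B^2 <= (c^2 A)^2.  As c^2 A >= 0, monotonicity
   of the square root gives B <= c^2 A, that is <AKx, Kx> <= c^2 <Ax, x>, and the
   Cauchy-Schwarz inequality for the positive form <A., .> concludes.
   The square-root step needs no spectral theory: if the numerical range of B - c^2 A
   reached mu > 0, an approximate eigenvector x for mu would make
   |Bx|^2 - |c^2 Ax|^2 close to mu^2 |x|^2 + 2 mu <c^2 Ax, x> > 0. *)

Local Notation Re := complex.Re.
Local Notation Im := complex.Im.

Section ComplexParts.
Context {R : rcfType}.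
Implicit Types (r : R) (z : R[i]).

Lemma ge0_Re z : 0 <= z -> 0 <= Re z.
Proof. by rewrite lecE => /andP[]. Qed.

Lemma real_complexE z : Im z = 0 -> z = (Re z)%:C.
Proof. by case: z => a b /= ->. Qed.

Lemma Re_conjc z : Re (conjc z) = Re z.
Proof. by case: z. Qed.

Lemma Re_realM r z : Re (r%:C * z) = r * Re z.
Proof. by case: z => a b /=; ring. Qed.

End ComplexParts.

Lemma quadratic_ge0_le (R : realFieldType) (F G n : R) :
  0 <= n -> 0 <= F -> 0 <= G ->
  (forall t, 0 <= F - 2 * t * n + t ^+ 2 * n * G) -> n <= F * G.
Proof.
move=> n0 F0 G0 quad_ge0.
have [G_eq0|G_neq0] := eqVneq G 0.
  rewrite G_eq0 mulr0 leNgt; apply/negP => n_gt0.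
  have := quad_ge0 ((F + 1) / (2 * n)); rewrite G_eq0.
  have -> : F - 2 * ((F + 1) / (2 * n)) * n + ((F + 1) / (2 * n)) ^+ 2 * n * 0 = -1.
    by field; exact: lt0r_neq0.
  by rewrite ler0N1.
have G_gt0 : 0 < G by rewrite lt_def G_neq0.
have := quad_ge0 G^-1.
have -> : F - 2 * G^-1 * n + G^-1 ^+ 2 * n * G = F - n / G by field; exact: lt0r_neq0.
by rewrite subr_ge0 ler_pdivrMr // mulrC.
Qed.

Lemma cross_terms_lt {R : realFieldType} {mu N s E r1 r2 : R} :
  0 < mu -> 0 <= N -> 1 / 2 <= s -> r1 ^+ 2 <= N * E -> r2 ^+ 2 <= E ->
  64 * (mu ^+ 2 + N) * E <= mu ^+ 4 -> 2 * mu * r2 + 2 * r1 < mu ^+ 2 * s.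
Proof.
move=> mu_gt0 N_ge0 s_ge r1_le r2_le E_small.
set t := 2 * mu * r2 + 2 * r1; set b := mu ^+ 2 / 2.
have b_gt0 : 0 < b by rewrite divr_gt0 ?exprn_gt0.
have t2_le : t ^+ 2 <= 8 * (mu ^+ 2 + N) * E.
  have := sqr_ge0 (2 * mu * r2 - 2 * r1).
  have := ler_wpM2l (ltW (exprn_gt0 2 mu_gt0)) r2_le.
  rewrite /t; nra.
have t2_lt : t ^+ 2 < b ^+ 2.
  have b2 : b ^+ 2 = mu ^+ 4 / 4 by rewrite /b exprMn -exprM; field.
  have := exprn_gt0 4 mu_gt0; rewrite b2; lra.
have t_lt : t < b by nra.
have : b <= mu ^+ 2 * s by rewrite /b; have := exprn_gt0 2 mu_gt0; nra.
lra.
Qed.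

Section HermitianForm.
Context {R : rcfType} {V : lmodType R[i]} {f : V -> V -> R[i]}.
Hypothesis f_linear : forall (a : R[i]) (x y z : V), f (a *: x + y) z = a * f x z + f y z.
Hypothesis f_conj : forall x y : V, f y x = conjc (f x y).
Hypothesis f_ge0 : forall x : V, 0 <= f x x.

Lemma hermitian_linearr a x y z : f z (a *: x + y) = conjc a * f z x + f z y.
Proof. by rewrite f_conj f_linear rmorphD rmorphM /= -!f_conj. Qed.

Lemma hermitian_cauchy_schwarz u v :
  Re (f u v) ^+ 2 + Im (f u v) ^+ 2 <= Re (f u u) * Re (f v v).
Proof.
apply: quadratic_ge0_le; rewrite ?addr_ge0 ?sqr_ge0 ?ge0_Re //.
move=> t; have /ge0_Re := f_ge0 (((- t)%:C * f u v) *: v + u).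
rewrite f_linear !hermitian_linearr (f_conj u v).
move: (ger0_Im (f_ge0 v)).
case: (f u v) => a b; case: (f u u) => F1 F2; case: (f v v) => G1 G2 /= ->.
by move=> h; lra.
Qed.

End HermitianForm.

Section Polarization.
Context {R : rcfType} {V : lmodType R[i]} {g : V -> V -> R[i]}.
Hypothesis g_linear : forall (a : R[i]) (x y z : V), g (a *: x + y) z = a * g x z + g y z.
Hypothesis g_linearr : forall (a : R[i]) (x y z : V), g z (a *: x + y) = conjc a * g z x + g z y.

(* Take a = 1 and a = i in g (a x + y) (a x + y) = 0. *)
Lemma sesquilinear_diag_eq0 : (forall x, g x x = 0) -> forall x y, g x y = 0.
Proof.
move=> g_diag x y.
have := g_diag (1 *: x + y); have := g_diag ('i *: x + y).
rewrite !(g_linear, g_linearr) !g_diag !rmorph1 !(mulr0, mul1r, add0r, addr0).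
move=> h_i /eqP; rewrite addr_eq0 => /eqP g_xy; move: h_i.
rewrite g_xy (conjCi _ : conjc 'i = - 'i) mulrN mulNr -opprD -mulrDr => /eqP.
by rewrite oppr_eq0 mulf_eq0 (negbTE (neq0Ci _)) -mulr2n mulrn_eq0 => /eqP->; rewrite oppr0.
Qed.

End Polarization.

Section LinearOps.
Context {R : rcfType} {V : lmodType R[i]}.
Implicit Types P Q : V -> V.

Lemma linear_opB {P Q} : linear P -> linear Q -> linear (fun x => P x - Q x).
Proof.
by move=> linP linQ a x y; rewrite linP linQ scalerBr opprD addrACA.
Qed.

Lemma linear_opZ (k : R[i]) {P} : linear P -> linear (fun x => k *: P x).
Proof. by move=> linP a x y; rewrite linP scalerDr !scalerA mulrC. Qed.

End LinearOps.

Section Forms.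
Context {R : realType} {V : lmodType R[i]} (ip : V -> V -> R[i]).

Definition sqnorm x := Re (ip x x).

Definition qform (T : V -> V) x := Re (ip (T x) x).

Definition qform_sup (T : V -> V) := sup [set qform T x | x in [set x | sqnorm x <= 1]].

End Forms.

Section InnerProduct.
Context {R : realType} {V : lmodType R[i]} {ip : V -> V -> R[i]} (hip : is_inner_product ip).
Local Notation sqnorm := (sqnorm ip).
Local Notation qform := (qform ip).
Local Notation qform_sup := (qform_sup ip).
Local Notation selfadjoint T := (is_adjoint ip T T).

Let ip_scalar z : scalar (ip ^~ z).
Proof. by move=> a x y; exact: ip_linear. Qed.

Lemma ipZl a x z : ip (a *: x) z = a * ip x z.
Proof. by rewrite (scalable_linear (ip_scalar z)). Qed.

Lemma ipBl x y z : ip (x - y) z = ip x z - ip y z.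
Proof. by rewrite (zmod_morphism_linear (ip_scalar z)). Qed.

Lemma ipDl x y z : ip (x + y) z = ip x z + ip y z.
Proof. by have := ip_linear hip 1 x y z; rewrite scale1r mul1r. Qed.

Lemma ipZr a x z : ip z (a *: x) = conjc a * ip z x.
Proof. by rewrite (ip_conj hip) ipZl rmorphM /= -(ip_conj hip). Qed.

Lemma ipBr x y z : ip z (x - y) = ip z x - ip z y.
Proof. by rewrite (ip_conj hip) ipBl rmorphB /= -!(ip_conj hip). Qed.

Lemma ipDr x y z : ip z (x + y) = ip z x + ip z y.
Proof. by rewrite (ip_conj hip) ipDl rmorphD /= -!(ip_conj hip). Qed.

Lemma ip_selfE x : ip x x = (sqnorm x)%:C.
Proof. exact/real_complexE/ger0_Im/(ip_ge0 hip). Qed.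

Lemma sqnorm_ge0 x : 0 <= sqnorm x.
Proof. exact/ge0_Re/(ip_ge0 hip). Qed.

Lemma sqnorm_eq0 x : sqnorm x = 0 -> x = 0.
Proof. by move=> x0; apply: (ip_definite hip); rewrite ip_selfE x0. Qed.

Lemma sqnorm0 : sqnorm 0 = 0.
Proof. by rewrite /sqnorm -[X in ip X _](subrr 0) ipBl subrr. Qed.

Lemma sqnormD x y : sqnorm (x + y) = sqnorm x + sqnorm y + 2 * Re (ip x y).
Proof.
by rewrite /sqnorm ipDl !ipDr (ip_conj hip x y) !raddfD /= Re_conjc; ring.
Qed.

Lemma sqnormB x y : sqnorm (x - y) = sqnorm x + sqnorm y - 2 * Re (ip x y).
Proof.
by rewrite /sqnorm ipBl !ipBr (ip_conj hip x y) !raddfB /= Re_conjc; ring.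
Qed.

Lemma sqnormZ (k : R) x : sqnorm (k%:C *: x) = k ^+ 2 * sqnorm x.
Proof. by rewrite /sqnorm ipZl ipZr conjc_real mulrA -rmorphM Re_realM expr2. Qed.

Lemma sqnormB_le x y : sqnorm (x - y) <= 2 * sqnorm x + 2 * sqnorm y.
Proof. have := sqnorm_ge0 (x + y); rewrite (sqnormD x y) (sqnormB x y); lra. Qed.

Lemma ip_cauchy_schwarz x y : Re (ip x y) ^+ 2 <= sqnorm x * sqnorm y.
Proof.
apply: le_trans (hermitian_cauchy_schwarz (ip_linear hip) (ip_conj hip) (ip_ge0 hip) x y).
by rewrite lerDl sqr_ge0.
Qed.

Lemma sqnorm_le_homogeneous (g : V -> R) (M : R) :
  (forall (k : R) x, g (k%:C *: x) = k ^+ 2 * g x) ->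
  (forall x, sqnorm x = 1 -> g x <= M) ->
  forall y, g y <= M * sqnorm y.
Proof.
move=> gZ g_unit y; have [y0|] := eqVneq (sqnorm y) 0.
  by rewrite (sqnorm_eq0 _ y0) sqnorm0 -(scale0r 0) gZ expr0n /= !mul0r mulr0.
rewrite neq_lt ltNge sqnorm_ge0 /= => y_gt0.
pose k := (Num.sqrt (sqnorm y))^-1.
have k2 : k ^+ 2 = (sqnorm y)^-1 by rewrite exprVn sqr_sqrtr ?sqnorm_ge0.
have := g_unit (k%:C *: y); rewrite sqnormZ gZ k2 mulVf ?gt_eqF // => /(_ erefl).
by rewrite mulrC ler_pdivrMr // mulrC.
Qed.

Lemma selfadjoint_ipE T x : selfadjoint T -> ip (T x) x = (qform T x)%:C.
Proof.
move=> adjT; apply: real_complexE; move: (ip_conj hip x (T x)); rewrite -adjT.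
by case: (ip (T x) x) => a b [] /eqP; rewrite -subr_eq0 opprK -mulr2n mulrn_eq0 => /eqP.
Qed.

Lemma op_cauchy_schwarz {T} : linear T -> selfadjoint T -> positive_op ip T ->
  forall u v, Re (ip (T u) v) ^+ 2 + Im (ip (T u) v) ^+ 2 <= qform T u * qform T v.
Proof.
move=> linT adjT posT; apply: hermitian_cauchy_schwarz posT.
- by move=> a x y z; rewrite linT ip_linear.
- by move=> x y; rewrite adjT (ip_conj hip).
Qed.

Lemma positive_selfadjoint {T} : linear T -> positive_op ip T -> selfadjoint T.
Proof.
move=> linT posT x y; apply/eqP; rewrite -subr_eq0; apply/eqP; move: x y.
apply: (@sesquilinear_diag_eq0 _ _ (fun x y => ip (T x) y - ip x (T y))).
- by move=> a x y z /=; rewrite linT !ipDl !ipZl; ring.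
- by move=> a x y z /=; rewrite linT !ipDr !ipZr; ring.
move=> x /=; rewrite (ip_conj hip (T x) x) [ip (T x) x]real_complexE ?conjc_real ?subrr //.
exact: ger0_Im.
Qed.

Lemma adjoint_sym {T S} : is_adjoint ip T S -> is_adjoint ip S T.
Proof. by move=> adjTS x y; rewrite (ip_conj hip) -adjTS -(ip_conj hip). Qed.

Lemma adjoint_linear {T S} : linear T -> is_adjoint ip T S -> linear S.
Proof.
move=> linT adjTS a x y; apply/eqP; rewrite -subr_eq0; apply/eqP.
apply: (ip_definite hip); set d := (X in ip X X).
by rewrite {2}/d !(ipBr, ipDr, ipZr) -!adjTS ipDr ipZr subrr.
Qed.

Lemma adjointB {T T' S S'} : is_adjoint ip T T' -> is_adjoint ip S S' ->
  is_adjoint ip (fun x => T x - S x) (fun x => T' x - S' x).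
Proof. by move=> adjT adjS x y; rewrite ipBl ipBr adjT adjS. Qed.

Lemma adjointZ (k : R) {T T'} : is_adjoint ip T T' ->
  is_adjoint ip (fun x => k%:C *: T x) (fun x => k%:C *: T' x).
Proof. by move=> adjT x y; rewrite ipZl ipZr conjc_real adjT. Qed.

Lemma qformZ {T} (k : R) x : linear T -> qform T (k%:C *: x) = k ^+ 2 * qform T x.
Proof.
move=> linT; rewrite /qform (scalable_linear linT) ipZl ipZr conjc_real mulrA.
by rewrite -rmorphM Re_realM expr2.
Qed.

Lemma positive_sqnorm_sqr_le {T} {L : R} : linear T -> selfadjoint T -> positive_op ip T ->
  0 <= L -> (forall z, sqnorm (T z) <= L * sqnorm z) ->
  forall y, sqnorm (T y) ^+ 2 <= L * qform T y ^+ 2.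
Proof.
move=> linT adjT posT L_ge0 boundT y.
have q_ge0 z : 0 <= qform T z by rewrite /qform; exact/ge0_Re/posT.
set e := sqnorm (T y); set q := qform T y; set X := qform T (T y).
have e_ge0 : 0 <= e := sqnorm_ge0 _.
have e2_le : e ^+ 2 <= q * X.
  apply: le_trans (op_cauchy_schwarz linT adjT posT y (T y)).
  by rewrite -/e lerDl sqr_ge0.
have X2_le : X ^+ 2 <= L * e ^+ 2.
  apply: le_trans (ip_cauchy_schwarz _ _) _.
  by rewrite -/e expr2 mulrA ler_wpM2r.
have [->|e_neq0] := eqVneq e 0; first by rewrite expr0n mulr_ge0 ?sqr_ge0.
have e2_gt0 : 0 < e ^+ 2 by rewrite exprn_gt0 // lt_def e_neq0.
rewrite -(ler_pM2r e2_gt0) -expr2.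
apply: le_trans (_ : (q * X) ^+ 2 <= _).
  by rewrite ler_sqr ?nnegrE ?exprn_ge0 ?mulr_ge0 ?q_ge0.
by rewrite exprMn [leRHS]mulrAC [leRHS]mulrC ler_wpM2l ?sqr_ge0.
Qed.

Lemma opnorm_ub {T} : bounded_op ip T ->
  forall x, ipnorm ip x <= 1 -> ipnorm ip (T x) <= opnorm ip T.
Proof.
case=> linT [M boundT] x x_le1; apply: sup_upper_bound; last by exists x.
split; first by exists (ipnorm ip (T x)), x.
exists `|M| => _ [z [z_le1 ->]]; apply: le_trans (boundT z) _.
have z_ge0 : 0 <= ipnorm ip z := sqrtr_ge0 _.
apply: le_trans (_ : `|M| * ipnorm ip z <= _); first by rewrite ler_wpM2r ?ler_norm.
by rewrite -[leRHS]mulr1 ler_wpM2l.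
Qed.

Lemma ipnorm0 : ipnorm ip 0 = 0.
Proof. by rewrite /ipnorm -/(sqnorm 0) sqnorm0 sqrtr0. Qed.

Lemma opnorm_ge0 {T} : bounded_op ip T -> 0 <= opnorm ip T.
Proof.
move=> bT; apply: le_trans (opnorm_ub bT 0 _); first exact: sqrtr_ge0.
by rewrite ipnorm0 ler01.
Qed.

Lemma sqnorm_le_opnorm {T} : bounded_op ip T ->
  forall x, sqnorm (T x) <= opnorm ip T ^+ 2 * sqnorm x.
Proof.
move=> bT; apply: sqnorm_le_homogeneous => [k x|x x_unit].
  by rewrite (scalable_linear bT.1) sqnormZ.
have := opnorm_ub bT x; rewrite /ipnorm -!/(sqnorm _) x_unit sqrtr1 lexx => /(_ isT).
move=> Tx_le; rewrite -(sqr_sqrtr (sqnorm_ge0 (T x))) !expr2.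
by rewrite ler_pM ?sqrtr_ge0.
Qed.

Lemma hyponormal_sqnorm {S T} : hyponormal ip S -> is_adjoint ip S T ->
  forall x, sqnorm (T x) <= sqnorm (S x).
Proof.
move=> hypS adjST x; have /ge0_Re := hypS T adjST x.
by rewrite ipBl raddfB /= subr_ge0 (adjoint_sym adjST) adjST.
Qed.

Section NumericalRange.
Variables (C : V -> V) (N : R).
Hypotheses (linC : linear C) (adjC : selfadjoint C) (N_ge0 : 0 <= N).
Hypothesis boundC : forall x, sqnorm (C x) <= N * sqnorm x.

Lemma has_sup_qform : has_sup [set qform C x | x in [set x | sqnorm x <= 1]].
Proof.
split; first by exists (qform C 0), 0; rewrite //= sqnorm0 ler01.
exists (1 + N) => _ [x /= x_le1 <-].
have q2_le : qform C x ^+ 2 <= N.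
  apply: le_trans (ip_cauchy_schwarz (C x) x) _.
  apply: le_trans (ler_wpM2r (sqnorm_ge0 x) (boundC x)) _.
  by rewrite -mulrA ler_piMr // mulr_ile1 ?sqnorm_ge0.
nra.
Qed.

Lemma qform_le_sup y : qform C y <= qform_sup C * sqnorm y.
Proof.
apply: sqnorm_le_homogeneous => [k x|x x_unit]; first exact: qformZ.
by apply: sup_upper_bound has_sup_qform _ _; exists x; rewrite //= x_unit.
Qed.

Lemma approx_eigenvector : 0 < qform_sup C -> forall eps : R, 0 < eps ->
  exists x, [/\ 1 / 2 <= sqnorm x, sqnorm x <= 1 &
                sqnorm ((qform_sup C)%:C *: x - C x) <= eps].
Proof.
set mu := qform_sup C => mu_gt0 eps eps_gt0.
pose D x := mu%:C *: x - C x.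
have linD : linear D.
  exact: linear_opB (linear_opZ mu%:C (linearP idfun)) linC.
have adjD : selfadjoint D.
  have adj_id : selfadjoint idfun by [].
  exact: adjointB (adjointZ mu adj_id) adjC.
have qD y : qform D y = mu * sqnorm y - qform C y.
  by rewrite /qform ipBl ipZl raddfB /= Re_realM.
have posD : positive_op ip D.
  by move=> y; rewrite selfadjoint_ipE // ler0c qD subr_ge0 qform_le_sup.
pose L : R := 2 * mu ^+ 2 + 2 * N.
have L_ge0 : 0 <= L by rewrite /L addr_ge0 // mulr_ge0 // sqr_ge0.
have boundD z : sqnorm (D z) <= L * sqnorm z.
  apply: le_trans (sqnormB_le _ _) _; rewrite sqnormZ.
  by have := boundC z; rewrite /L; lra.
pose d := Num.min (mu / 2) (eps / (L + 1)).
have d_gt0 : 0 < d by rewrite lt_min !divr_gt0 ?ltr_pwDr.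
have [_ [x /= x_le1 <-]] := sup_adherent d_gt0 has_sup_qform.
rewrite -/(qform_sup C) -/mu => qx_gt.
have d_le_mu : d <= mu / 2 by rewrite ge_min lexx.
have d_le_eps : d * (L + 1) <= eps by rewrite -ler_pdivlMr ?ltr_pwDr // ge_min lexx orbT.
have qx_le : qform C x <= mu * sqnorm x := qform_le_sup x.
have x_ge0 := sqnorm_ge0 x.
have qDx_ge0 : 0 <= qform D x by rewrite qD subr_ge0.
have qDx_le : qform D x <= d by rewrite qD; nra.
exists x; split => //; first by nra.
have DxE := positive_sqnorm_sqr_le linD adjD posD L_ge0 boundD x.
have Dx_sqr_le : sqnorm (D x) ^+ 2 <= (d * (L + 1)) ^+ 2.
  apply: le_trans DxE _; rewrite exprMn mulrC.
  apply: ler_pM; rewrite ?sqr_ge0 ?ler_sqr ?nnegrE ?(ltW d_gt0) //; nra.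
have dL_ge0 : 0 <= d * (L + 1) by rewrite mulr_ge0 ?(ltW d_gt0) //; lra.
apply: le_trans d_le_eps; rewrite -ler_sqr ?nnegrE ?sqnorm_ge0 //; exact: Dx_sqr_le.
Qed.

End NumericalRange.

Lemma qform_le_of_sqnorm_le {P Q} {N : R} :
  linear P -> linear Q -> selfadjoint P -> selfadjoint Q -> positive_op ip Q ->
  0 <= N -> (forall x, sqnorm (Q x) <= N * sqnorm x) ->
  (forall x, sqnorm (P x) <= sqnorm (Q x)) ->
  forall x, qform P x <= qform Q x.
Proof.
move=> linP linQ adjP adjQ posQ N_ge0 boundQ P_le_Q x0.
pose C x := P x - Q x.
have linC : linear C := linear_opB linP linQ.
have adjC : selfadjoint C := adjointB adjP adjQ.
have boundC x : sqnorm (C x) <= 4 * N * sqnorm x.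
  apply: le_trans (sqnormB_le _ _) _.
  by have := P_le_Q x; have := boundQ x; lra.
have qC x : qform C x = qform P x - qform Q x by rewrite /qform ipBl raddfB.
rewrite -subr_le0 -qC leNgt; apply/negP => qCx0_gt0.
have N4_ge0 : 0 <= 4 * N by rewrite mulr_ge0.
set mu := qform_sup C.
have mu_gt0 : 0 < mu.
  have := qform_le_sup _ _ linC N4_ge0 boundC x0; rewrite -/mu.
  have := sqnorm_ge0 x0; nra.
pose eps : R := mu ^+ 4 / (64 * (mu ^+ 2 + N)).
have mu2N_gt0 : 0 < mu ^+ 2 + N by rewrite ltr_wpDr ?exprn_gt0.
have eps_gt0 : 0 < eps by rewrite divr_gt0 ?exprn_gt0 ?mulr_gt0.
have [x [x_ge x_le1 e_le]] := approx_eigenvector _ _ linC adjC N4_ge0 boundC mu_gt0 _ eps_gt0.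
move: e_le; rewrite -/mu; set e := _ - C x => e_le.
have Px_eq : P x = Q x + (mu%:C *: x - e) by rewrite /e subKr /C subrKC.
clearbody e.
have := P_le_Q x; rewrite Px_eq sqnormD sqnormB sqnormZ ipZl ipBr ipZr conjc_real.
rewrite raddfB /= !Re_realM -/(qform Q x).
have qQx_ge0 : 0 <= qform Q x by rewrite /qform; exact/ge0_Re/posQ.
have r1_le : Re (ip (Q x) e) ^+ 2 <= N * sqnorm e.
  apply: le_trans (ip_cauchy_schwarz _ _) _; rewrite ler_wpM2r ?sqnorm_ge0 //.
  by apply: le_trans (boundQ x) _; rewrite ler_piMr.
have r2_le : Re (ip x e) ^+ 2 <= sqnorm e.
  by apply: le_trans (ip_cauchy_schwarz _ _) _; rewrite ler_piMl ?sqnorm_ge0.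
have E_small : 64 * (mu ^+ 2 + N) * sqnorm e <= mu ^+ 4.
  by rewrite mulrC -ler_pdivlMr ?mulr_gt0.
have := cross_terms_lt mu_gt0 N_ge0 x_ge r1_le r2_le E_small.
have := sqnorm_ge0 e; have := mulr_ge0 (ltW mu_gt0) qQx_ge0; lra.
Qed.

Lemma abs_ip_le_of_qform_le {A} {u x : V} {c : R} :
  linear A -> positive_op ip A -> 0 <= c -> qform A u <= c ^+ 2 * qform A x ->
  `|ip (A u) x| <= c%:C * ip (A x) x.
Proof.
move=> linA posA c_ge0 qAu_le.
have adjA := positive_selfadjoint linA posA.
have qAx_ge0 : 0 <= qform A x by rewrite /qform; exact/ge0_Re/posA.
have CS := op_cauchy_schwarz linA adjA posA u x.
rewrite selfadjoint_ipE // normc_def -rmorphM lecR.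
rewrite -(ger0_norm (mulr_ge0 c_ge0 qAx_ge0)) -sqrtr_sqr ler_sqrt ?sqr_ge0 //.
by apply: le_trans CS _; rewrite exprMn [qform A x ^+ 2]expr2 mulrA ler_wpM2r.
Qed.

Section HyponormalProduct.
Context {A K S : V -> V} {a c : R}.
Hypotheses (linA : linear A) (linK : linear K) (posA : positive_op ip A).
Hypothesis adjAK : is_adjoint ip (fun x => A (K x)) S.
Hypothesis boundA : forall x, sqnorm (A x) <= a ^+ 2 * sqnorm x.
Hypothesis boundK : forall x, sqnorm (K x) <= c ^+ 2 * sqnorm x.

Let adjA : selfadjoint A := positive_selfadjoint linA posA.

Lemma sqnorm_adjoint_le y : sqnorm (S y) <= c ^+ 2 * sqnorm (A y).
Proof.
have S_eq : sqnorm (S y) = Re (ip (K (S y)) (A y)) by rewrite /sqnorm -adjAK adjA.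
have := ip_cauchy_schwarz (K (S y)) (A y); rewrite -S_eq.
have := boundK (S y); have := sqnorm_ge0 (S y); have := sqnorm_ge0 (A y).
set s := sqnorm (S y); set t := sqnorm (A y) => t_ge0 s_ge0 KS_le s2_le.
have [->|s_neq0] := eqVneq s 0; first by rewrite mulr_ge0 ?sqr_ge0.
have s_gt0 : 0 < s by rewrite lt_def s_neq0.
rewrite -(ler_pM2r s_gt0) mulrAC -expr2; apply: le_trans s2_le _.
by rewrite ler_wpM2r.
Qed.

Lemma qform_AK_le : hyponormal ip S -> forall x, qform A (K x) <= c ^+ 2 * qform A x.
Proof.
move=> hypS x.
have linS : linear S by apply: adjoint_linear adjAK => k u v; rewrite linK linA.
have linSK : linear (fun x => S (K x)) by move=> k u v; rewrite linK linS.
have adjSK : selfadjoint (fun x => S (K x)).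
  by move=> u v; rewrite (adjoint_sym adjAK) /= -adjA adjAK.
have posQ : positive_op ip (fun x => (c ^+ 2)%:C *: A x).
  by move=> y; rewrite ipZl mulr_ge0 ?ler0c ?sqr_ge0.
have boundQ y : sqnorm ((c ^+ 2)%:C *: A y) <= (c ^+ 2) ^+ 2 * a ^+ 2 * sqnorm y.
  by rewrite sqnormZ -mulrA ler_wpM2l ?sqr_ge0.
have SK_le y : sqnorm (S (K y)) <= sqnorm ((c ^+ 2)%:C *: A y).
  rewrite sqnormZ expr2 -mulrA.
  apply: le_trans (sqnorm_adjoint_le (K y)) _; apply: ler_wpM2l; first exact: sqr_ge0.
  apply: le_trans (hyponormal_sqnorm hypS (adjoint_sym adjAK) y) _.
  exact: sqnorm_adjoint_le.
have := qform_le_of_sqnorm_le linSK (linear_opZ _ linA) adjSK (adjointZ _ adjA) posQ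
  (mulr_ge0 (sqr_ge0 _) (sqr_ge0 _)) boundQ SK_le x.
by rewrite /qform adjSK -adjAK ipZl Re_realM.
Qed.

End HyponormalProduct.

End InnerProduct.

Theorem mainTheorem1 (R : realType) (V : lmodType R[i]) (ip : V -> V -> R[i])
  (hH : is_Hilbert ip) (A K : V -> V)
  (hA : bounded_op ip A) (hK : bounded_op ip K) (hApos : positive_op ip A)
  (AKadj : V -> V) (hadj : is_adjoint ip (fun x => A (K x)) AKadj)
  (hhypo : hyponormal ip AKadj) :
  forall x : V, `| ip (A (K x)) x | <= (opnorm ip K)%:C * ip (A x) x.
Proof.
have [hip _] := hH; have [linA _] := hA; have [linK _] := hK.
move=> x; apply: (abs_ip_le_of_qform_le hip linA hApos (opnorm_ge0 hip hK)).
exact: (qform_AK_le hip linA linK hApos hadj (sqnorm_le_opnorm hip hA)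
  (sqnorm_le_opnorm hip hK) hhypo x).
Qed.
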